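(* Let $q\in(0,1)$, $\alpha\in(-1,1)$ and $\beta<1$ real. If $\beta\le\alpha$, then the discrete part $\mu_d$ of the orthogonality measure $\mu$ of the polynomials $p_n^{(\alpha,\beta)}(\cdot;q)$ vanishes.
   Context: The monic polynomials $p_n=p_n^{(\alpha,\beta)}(x;q)$ satisfy $p_{-1}=0$, $p_0=1$, $p_{n+1}(x)=xp_n(x)-\tilde\gamma_{n-1}\tilde\gamma_np_{n-1}(x)$ for $n\in\mathbb{N}_0$, where $\tilde\gamma_n=(1-\alpha q^n)/(1-\beta q^n)$. $\mu$ is the Borel probability measure on $\mathbb{R}$ with $\int p_mp_n\,{\rm d}\mu=\delta_{m,n}\prod_{j=0}^{n-1}\tilde\gamma_j\tilde\gamma_{j+1}$, and $\mu_d$ is its discrete (atomic) part. *)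

From HB Require Import structures.
From mathcomp Require Import all_boot all_order all_algebra.
From mathcomp Require Import all_classical all_reals all_analysis.
Set Implicit Arguments. Unset Strict Implicit. Unset Printing Implicit Defensive.
Import Order.TTheory GRing.Theory Num.Theory.
Local Open Scope classical_set_scope.
Local Open Scope ring_scope.

Definition gammat {R : realType} (a b q : R) (n : nat) : R :=
  (1 - a * q ^+ n) / (1 - b * q ^+ n).

(* pq_pair n = (p_n, p_{n-1}), with p_{-1} = 0, p_0 = 1 and
   p_{n+1} = X p_n - gammat_{n-1} gammat_n p_{n-1}.
   For n = 0 the coefficient multiplies p_{-1} = 0, so the value used for
   gammat_{-1} (here gammat_0, by truncated subtraction) is irrelevant. *)
Fixpoint pq_pair {R : realType} (a b q : R) (n : nat) : {poly R} * {poly R} :=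
  match n with
  | 0%N => (1, 0)
  | n'.+1 => let: (p, pm) := pq_pair a b q n' in
      ('X * p - (gammat a b q n'.-1 * gammat a b q n') *: pm, p)
  end.

Definition pq {R : realType} (a b q : R) (n : nat) : {poly R} :=
  (pq_pair a b q n).1.

Definition pq_norm {R : realType} (a b q : R) (n : nat) : R :=
  \prod_(0 <= j < n) (gammat a b q j * gammat a b q j.+1).

Definition discrete_part {R : realType} (mu : set R -> \bar R) (A : set R) : \bar R :=
  (\esum_(x in A) mu [set x])%E.

From HB Require Import structures.
From mathcomp Require Import all_boot all_order all_algebra.
From mathcomp Require Import all_classical all_reals all_analysis.
From mathcomp Require Import ring lra.
Import Order.TTheory GRing.Theory Num.Theory.
Local Open Scope classical_set_scope.
Local Open Scope ring_scope.

(* Suppose x0 were an atom of mass r > 0.  With h_n the squared norms, the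
   kernel K(y) = sum_(i < N) p_i(x0) p_i(y) / h_i satisfies, by orthogonality,
   int K^2 dmu = K(x0) = S_N := sum_(i < N) p_i(x0)^2 / h_i, while the atom alone
   contributes r K(x0)^2; hence r S_N <= 1 for all N.  When b <= a the
   recurrence coefficients c_n = gammat_n gammat_(n+1) lie in (0, 1] and
   increase with n, so the form (p_(n+1)^2 - x p_(n+1) p_n + c_n p_n^2) / h_n at
   x = x0 is nondecreasing from c_0; as it is at most (1 + |x|) times the sum
   of two consecutive terms of S_N, S_N grows linearly, a contradiction. *)

Lemma lin_frac_gt0 (R : realFieldType) (a b t : R) :
  a < 1 -> b < 1 -> 0 <= t <= 1 -> 0 < (1 - a * t) / (1 - b * t).
Proof.
move=> a1 b1 /andP[t0 t1].
have ta : 0 <= t * (1 - a) by rewrite mulr_ge0 // subr_ge0 ltW.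
have tb : 0 <= t * (1 - b) by rewrite mulr_ge0 // subr_ge0 ltW.
by apply: divr_gt0; nra.
Qed.

Lemma lin_frac_antitone (R : realFieldType) (a b s t : R) :
  b <= a -> b < 1 -> 0 <= s <= t -> t <= 1 ->
  (1 - a * t) / (1 - b * t) <= (1 - a * s) / (1 - b * s).
Proof.
move=> ba b1 /andP[s0 st] t1.
have t0 : 0 <= t := le_trans s0 st.
have tb : 0 <= t * (1 - b) by rewrite mulr_ge0 // subr_ge0 ltW.
have sb : 0 <= s * (1 - b) by rewrite mulr_ge0 // subr_ge0 ltW.
have dt : 0 < 1 - b * t by nra.
have ds : 0 < 1 - b * s by nra.
have key : 0 <= (a - b) * (t - s) by rewrite mulr_ge0 // subr_ge0.
by rewrite ler_pdivrMr // mulrAC ler_pdivlMr //; nra.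
Qed.

Section recurrence_coefficients.
Variables (R : realType) (a b q : R).
Hypotheses (q_gt0 : 0 < q) (q_le1 : q <= 1) (a_lt1 : a < 1) (b_lt1 : b < 1).

Lemma exprn_itv01 n : 0 <= q ^+ n <= 1.
Proof. by rewrite exprn_ge0 ?exprn_ile1 // ltW. Qed.

Lemma gammat_gt0 n : 0 < gammat a b q n.
Proof. exact: lin_frac_gt0 (exprn_itv01 n). Qed.

Hypothesis b_le_a : b <= a.

Lemma gammat_le1 n : gammat a b q n <= 1.
Proof.
have /andP[t0 t1] := exprn_itv01 n.
have := @lin_frac_antitone _ a b 0 _ b_le_a b_lt1 _ t1.
by rewrite lexx t0 !mulr0 !subr0 divr1; apply.
Qed.

Lemma gammat_nondecr n : gammat a b q n <= gammat a b q n.+1.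
Proof.
have /andP[t0 t1] := exprn_itv01 n.
apply: lin_frac_antitone => //.
by rewrite exprS ler_piMl // andbT mulr_ge0 // ltW.
Qed.

End recurrence_coefficients.

Definition christoffel_sum {R : fieldType} (v h : nat -> R) (N : nat) : R :=
  \sum_(i < N) v i ^+ 2 / h i.

Section three_term_recurrence.
Context {R : archiRealFieldType} {c : nat -> R} {x : R} {u : nat -> R}.
Hypotheses (c_gt0 : forall n, 0 < c n) (c_le1 : forall n, c n <= 1)
  (c_nondecr : forall n, c n <= c n.+1).
Hypotheses (u0 : u 0 = 1) (u1 : u 1 = x)
  (uSS : forall n, u n.+2 = x * u n.+1 - c n * u n).

Let h n := \prod_(0 <= j < n) c j.
Let T n := u n ^+ 2 / h n.
Let quad_form n := (u n.+1 ^+ 2 - x * u n.+1 * u n + c n * u n ^+ 2) / h n.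

Let hS n : h n.+1 = h n * c n.
Proof. by rewrite /h big_nat_recr. Qed.

Let h_gt0 n : 0 < h n.
Proof. by elim: n => [|n IH]; rewrite ?hS ?mulr_gt0 // /h big_geq. Qed.

Let quad_formS n : quad_form n.+1 = quad_form n + (c n.+1 - c n) * T n.+1.
Proof.
rewrite /quad_form /T uSS hS.
have hn := h_gt0 n; have cn := c_gt0 n.
by field; rewrite !gt_eqF.
Qed.

Let quad_form_ge n : c 0 <= quad_form n.
Proof.
elim: n => [|n IH].
  by rewrite /quad_form u0 u1 /h big_geq // expr1n !mulr1 -expr2 subrr add0r divr1.
by rewrite quad_formS ler_wpDr // mulr_ge0 ?subr_ge0 // divr_ge0 ?sqr_ge0 ?ltW.
Qed.

Let quad_form_le n : quad_form n <= (1 + `|x|) * (T n.+1 + T n).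
Proof.
rewrite /quad_form /T hS.
set A := u n.+1; set B := u n; set H := h n; set C := c n.
have hH : 0 < H := h_gt0 n.
have hC : 0 < C := c_gt0 n.
have hC1 : C <= 1 := c_le1 n.
have -> : (1 + `|x|) * (A ^+ 2 / (H * C) + B ^+ 2 / H)
    = (1 + `|x|) * (A ^+ 2 / C + B ^+ 2) / H.
  by field; rewrite !gt_eqF.
rewrite ler_pM2r ?invr_gt0 //.
have AC : A ^+ 2 <= A ^+ 2 / C by rewrite ler_pdivlMr // ler_piMr ?sqr_ge0.
have xAB : - (x * A * B) <= `|x| * (A ^+ 2 + B ^+ 2).
  rewrite -mulrA -normrN -mulNr (le_trans (ler_norm _)) // normrM ler_wpM2l //.
  rewrite normrM -[A ^+ 2]real_normK ?num_real // -[B ^+ 2]real_normK ?num_real //.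
  have := mulr_ge0 (normr_ge0 A) (normr_ge0 B).
  by have := sqr_ge0 (`|A| - `|B|); rewrite sqrrB; lra.
have hA := sqr_ge0 A; have hB := sqr_ge0 B; have hx := normr_ge0 x.
nra.
Qed.

Lemma christoffel_sum_ge k : k%:R * (c 0 / (1 + `|x|)) <= christoffel_sum u h (2 * k).
Proof.
have hx : 0 < 1 + `|x| by rewrite ltr_pwDl.
elim: k => [|k IH]; first by rewrite mul0r /christoffel_sum big_ord0.
rewrite /christoffel_sum mulnS !big_ord_recr /= -addrA mulrSr mulrDl mul1r.
apply: lerD => //; rewrite ler_pdivrMr // addrC mulrC.
exact: le_trans (quad_form_ge (2 * k)) (quad_form_le (2 * k)).
Qed.

Lemma christoffel_sum_unbounded M : exists N, M < christoffel_sum u h N.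
Proof.
have hx : 0 < 1 + `|x| by rewrite ltr_pwDl.
have del : 0 < c 0 / (1 + `|x|) by rewrite divr_gt0.
exists (2 * Num.bound (`|M| / (c 0 / (1 + `|x|))))%N.
apply: lt_le_trans (christoffel_sum_ge _).
rewrite -ltr_pdivrMr //; apply: le_lt_trans (archi_boundP _); last first.
  by rewrite divr_ge0 // ltW.
by rewrite ler_pM2r ?invr_gt0 // ler_norm.
Qed.

End three_term_recurrence.

Lemma atom_le_integral d (T : measurableType d) (R : realType)
    (mu : {measure set T -> \bar R}) (g : T -> R) (x0 : T) :
  measurable [set x0] -> measurable_fun setT g -> (forall y, 0 <= g y) ->
  ((g x0)%:E * mu [set x0] <= \int[mu]_y (g y)%:E)%E.
Proof.
move=> mx0 mg g0.
rewrite -integral_cst // (eq_integral (fun y => (g y)%:E)); last first.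
  by move=> y /set_mem ->.
apply: ge0_subset_integral => //; last by move=> y _; rewrite lee_fin.
exact/measurable_realfun.measurable_EFinP.
Qed.

Section orthogonal_family.
Context {d : measure_display} {T : measurableType d} {R : realType}.
Context (mu : {measure set T -> \bar R}) {f : nat -> T -> R} {h : nat -> R}.
Hypotheses (f_int : forall m n, mu.-integrable setT (fun y => (f m y * f n y)%:E))
  (f_orth : forall m n, (\int[mu]_y (f m y * f n y)%:E)%E = (if m == n then h n else 0)%:E).

Let comb (w : nat -> R) N y := \sum_(i < N) w i * f i y.

Let sqr_combE w N y : (comb w N y ^+ 2)%:E =
  (\sum_(i < N) \sum_(j < N) (w i * w j)%:E * (f i y * f j y)%:E)%E.
Proof.
rewrite expr2 /comb mulr_suml -sumEFin; apply: eq_bigr => i _.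
rewrite mulr_sumr -sumEFin; apply: eq_bigr => j _.
by rewrite -EFinM mulrACA.
Qed.

Let integrable_comb_term (w : nat -> R) N (i : nat) : mu.-integrable setT
  (fun y => \sum_(j < N) (w i * w j)%:E * (f i y * f j y)%:E)%E.
Proof. by apply: integrable_sum => // j _; apply: integrableZl. Qed.

Lemma integrable_sqr_comb w N : mu.-integrable setT (fun y => (comb w N y ^+ 2)%:E).
Proof.
under eq_fun do rewrite sqr_combE.
by apply: integrable_sum => // i _; apply: integrable_comb_term.
Qed.

Lemma integral_sqr_comb w N :
  (\int[mu]_y (comb w N y ^+ 2)%:E)%E = (\sum_(i < N) w i ^+ 2 * h i)%:E.
Proof.
under eq_integral do rewrite sqr_combE.
rewrite integral_sum // -sumEFin; apply: eq_bigr => i _.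
rewrite integral_sum // => [|j]; last exact: integrableZl.
under eq_bigr do rewrite integralZl // f_orth -EFinM.
rewrite sumEFin (bigD1 i) //= eqxx big1 ?addr0 ?expr2 // => j /negbTE ji.
by rewrite eq_sym -(inj_eq val_inj) /= in ji; rewrite ji mulr0.
Qed.

Lemma christoffel_atom_bound (x0 : T) (r : R) N :
  measurable [set x0] -> (forall n, 0 < h n) -> mu [set x0] = r%:E ->
  r * christoffel_sum (f ^~ x0) h N ^+ 2 <= christoffel_sum (f ^~ x0) h N.
Proof.
move=> mx0 h_gt0 mu_x0.
pose w i := f i x0 / h i.
have combE : comb w N x0 = christoffel_sum (f ^~ x0) h N.
  by apply: eq_bigr => i _; rewrite /w mulrAC -expr2.
have normE : \sum_(i < N) w i ^+ 2 * h i = christoffel_sum (f ^~ x0) h N.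
  by apply: eq_bigr => i _; rewrite /w; field; rewrite gt_eqF.
rewrite -lee_fin -{2}normE -integral_sqr_comb mulrC EFinM -mu_x0 -combE.
apply: atom_le_integral => // [|y]; last exact: sqr_ge0.
apply/measurable_realfun.measurable_EFinP.
exact: measurable_int (integrable_sqr_comb w N).
Qed.

End orthogonal_family.

Lemma eq0_of_mul_sqr_le_unbounded (R : realFieldType) (r : R) (S : nat -> R) :
  0 <= r -> (forall N, r * S N ^+ 2 <= S N) -> (forall M, exists N, M < S N) ->
  r = 0.
Proof.
move=> r_ge0 rS S_unbounded; apply/eqP; rewrite eq_le r_ge0 andbT leNgt.
apply/negP => r_gt0; have [N SN] := S_unbounded r^-1.
have SN_gt0 : 0 < S N by apply: lt_trans SN; rewrite invr_gt0.
have rS_gt1 : 1 < r * S N by rewrite -(mulfV (lt0r_neq0 r_gt0)) ltr_pM2l.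
by have := rS N; rewrite expr2; nra.
Qed.

Lemma horner_pq0 {R : realType} (a b q x : R) : (pq a b q 0).[x] = 1.
Proof. exact: hornerC. Qed.

Lemma horner_pq1 {R : realType} (a b q x : R) : (pq a b q 1).[x] = x.
Proof. by rewrite /pq /= scaler0 subr0 mulr1 hornerX. Qed.

Lemma horner_pqSS {R : realType} (a b q x : R) n : (pq a b q n.+2).[x] =
  x * (pq a b q n.+1).[x] - gammat a b q n * gammat a b q n.+1 * (pq a b q n).[x].
Proof.
rewrite /pq /=; case: (pq_pair a b q n) => p pm /=.
by rewrite hornerD hornerN hornerZ hornerM hornerX.
Qed.

Theorem proposition2p13 (R : realType) (q a b : R)
  (hq0 : 0 < q) (hq1 : q < 1) (ha1 : -1 < a) (ha2 : a < 1) (hb : b < 1)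
  (mu : probability R R)
  (hint : forall m n : nat,
      mu.-integrable setT (fun x => ((pq a b q m).[x] * (pq a b q n).[x])%:E))
  (horth : forall m n : nat,
      (\int[mu]_x ((pq a b q m).[x] * (pq a b q n).[x])%:E)%E
      = (if m == n then pq_norm a b q n else 0)%:E) :
  b <= a -> forall A : set R, measurable A -> discrete_part mu A = 0%E.
Proof.
move=> hba A _; apply: esum1 => x0 _.
have q_le1 := ltW hq1.
pose c j := gammat a b q j * gammat a b q j.+1.
have c_gt0 j : 0 < c j by rewrite mulr_gt0 ?gammat_gt0.
have c_le1 j : c j <= 1 by rewrite mulr_ile1 ?gammat_le1 // ltW ?gammat_gt0.
have c_nondecr j : c j <= c j.+1.
  by rewrite ler_pM ?gammat_nondecr // ltW ?gammat_gt0.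
have norm_gt0 n : 0 < pq_norm a b q n.
  by rewrite /pq_norm prodr_gt0 // => j _; apply: c_gt0.
have mu_x0 : mu [set x0] = (fine (mu [set x0]))%:E.
  by rewrite fineK // fin_num_measure.
rewrite mu_x0; congr EFin.
apply: (@eq0_of_mul_sqr_le_unbounded _ _
  (christoffel_sum (fun n => (pq a b q n).[x0]) (pq_norm a b q))).
- by rewrite -lee_fin -mu_x0 measure_ge0.
- by move=> N; apply: (christoffel_atom_bound mu hint horth).
- exact: (christoffel_sum_unbounded c_gt0 c_le1 c_nondecr
    (horner_pq0 a b q x0) (horner_pq1 a b q x0) (horner_pqSS a b q x0)).
Qed.
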